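(* Assume $g(k)\sim k^\alpha$ for some $\alpha\in(0,1]$. For $\varphi>0$ let $X$ have distribution $\mathcal P_\varphi$. Then for each $n\in\mathbb N$, $E[X^n]\sim\varphi^{n/\alpha}$ as $\varphi\to\infty$. Consequently $\ln Z(\varphi)\sim\alpha\varphi^{1/\alpha}$ and $\mathrm{Var}[X]=o(\varphi^{2/\alpha})$ as $\varphi\to\infty$.
   Context: $g:\mathbb N_0\to[0,\infty)$ with $g(n)=0$ iff $n=0$ (also Lipschitz and nondecreasing), $\lim_{k\to\infty}g(k)/k^\alpha=1$. $g(0)!=1$, $g(n)!=\prod_{i=1}^ng(i)$, $Z(\phi)=\sum_{n\ge0}\phi^n/g(n)!$, $\mathcal P_\phi(n)=\phi^n/(g(n)!Z(\phi))$. $a(\varphi)\sim b(\varphi)$ means $a/b\to1$. *)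

From Stdlib Require Import Reals.
From Coquelicot Require Import Coquelicot.
Open Scope R_scope.

Fixpoint gfact (g : nat -> R) (n : nat) : R :=
  match n with
  | O => 1
  | S m => gfact g m * g (S m)
  end.

Definition Zpart (g : nat -> R) (phi : R) : R :=
  Series (fun n => phi ^ n / gfact g n).

Definition Pphi (g : nat -> R) (phi : R) (n : nat) : R :=
  phi ^ n / (gfact g n * Zpart g phi).

Definition moment (g : nat -> R) (phi : R) (m : nat) : R :=
  Series (fun k => INR k ^ m * Pphi g phi k).

Definition variance (g : nat -> R) (phi : R) : R :=
  moment g phi 2 - (moment g phi 1) ^ 2.

Definition admissible_g (g : nat -> R) : Prop :=
  (forall n, 0 <= g n) /\
  (forall n, g n = 0 <-> n = O) /\
  (exists L, forall m n, Rabs (g m - g n) <= L * Rabs (INR m - INR n)) /\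
  (forall m n, (m <= n)%nat -> g m <= g n).

From Stdlib Require Import Reals Lra Lia.
From Coquelicot Require Import Coquelicot.
Open Scope R_scope.

(* The weights a_k = phi^k / g(k)! of P_phi have ratio a_(k+1) / a_k = phi / g(k+1).  Since
   g(k) ~ k^alpha, with T = phi^(1/alpha) this ratio is below a fixed r < 1 for k >= (1+d) T
   and above a fixed 1/rho > 1 for k <= (1-d) T, once phi is large.  Comparing with geometric
   series on both sides shows that, even after weighting by k^n, all but a vanishing fraction
   of the mass sits in [(1-d) T, (1+d) T]; hence E[X^n] ~ T^n.  Then (ln Z)' = E[X] / phi and
   (alpha phi^(1/alpha))' = phi^(1/alpha - 1), so l'Hopital's rule gives ln Z ~ alpha T, and
   Var X = E[X^2] - E[X]^2 = o(T^2). *)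

Lemma Series_ge_0 (a : nat -> R) :
  (forall k, 0 <= a k) -> ex_series a -> 0 <= Series a.
Proof.
  intros Ha Hex.
  replace 0 with (Series (fun k => 0 * a k)) by (rewrite Series_scal_l; ring).
  apply Series_le; auto.
  intros k; rewrite Rmult_0_l; auto with real.
Qed.

Lemma sum_f_R0_le_Series (a : nat -> R) (N : nat) :
  (forall k, 0 <= a k) -> ex_series a -> sum_f_R0 a N <= Series a.
Proof.
  intros Ha Hex.
  rewrite (Series_incr_n a (S N)) by (auto; lia); simpl.
  assert (0 <= Series (fun k => a (S (N + k)))).
  { apply Series_ge_0; auto. exact (proj1 (ex_series_incr_n a (S N)) Hex). }
  lra.
Qed.

Lemma term_le_Series (a : nat -> R) (N : nat) :
  (forall k, 0 <= a k) -> ex_series a -> a N <= Series a.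
Proof.
  intros Ha Hex.
  apply Rle_trans with (sum_f_R0 a N); [|apply sum_f_R0_le_Series; auto].
  destruct N as [|N]; simpl; [lra|].
  assert (0 <= sum_f_R0 a N) by (apply cond_pos_sum; auto). lra.
Qed.

Lemma sum_f_R0_pow_sub_le (rho : R) (L m : nat) :
  0 <= rho < 1 -> (L <= m)%nat ->
  sum_f_R0 (fun k => rho ^ (m - k)) L <= rho ^ (m - L) / (1 - rho).
Proof.
  intros Hrho. induction L as [|L IH]; intros HL; simpl.
  - rewrite Nat.sub_0_r.
    assert (0 <= rho ^ m) by (apply pow_le; lra).
    apply Rmult_le_reg_r with (1 - rho); [lra|].
    unfold Rdiv; rewrite Rmult_assoc, Rinv_l, Rmult_1_r by lra. nra.
  - specialize (IH ltac:(lia)).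
    replace (m - L)%nat with (S (m - S L)) in IH by lia. simpl in IH.
    assert (0 <= rho ^ (m - S L)) by (apply pow_le; lra).
    replace (rho ^ (m - S L) / (1 - rho))
      with (rho * rho ^ (m - S L) / (1 - rho) + rho ^ (m - S L)) by (field; lra).
    lra.
Qed.

Lemma is_lim_seq_pow (u : nat -> R) (l : R) (n : nat) :
  is_lim_seq u l -> is_lim_seq (fun k => u k ^ n) (l ^ n).
Proof.
  intros Hu. induction n as [|n IH]; simpl.
  - apply is_lim_seq_const.
  - exact (is_lim_seq_mult' _ _ _ _ Hu IH).
Qed.

Lemma is_lim_seq_succ_ratio : is_lim_seq (fun k => (INR (S k) + 1) / (INR k + 1)) 1.
Proof.
  assert (Hinv : is_lim_seq (fun k => / (INR k + 1)) 0).
  { replace (Finite 0) with (Rbar_inv p_infty) by reflexivity.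
    apply is_lim_seq_inv; [|discriminate].
    eapply is_lim_seq_plus; [apply is_lim_seq_INR | apply is_lim_seq_const | constructor]. }
  rewrite <- (Rplus_0_r 1).
  eapply is_lim_seq_ext; [|exact (is_lim_seq_plus' _ _ _ _ (is_lim_seq_const 1) Hinv)].
  intros k. rewrite S_INR. field. pose proof (pos_INR k). lra.
Qed.

Lemma ex_series_pow_succ_mul (c : nat -> R) (l : R) (n : nat) :
  l < 1 -> (forall k, 0 < c k) -> is_lim_seq (fun k => c (S k) / c k) l ->
  ex_series (fun k => (INR k + 1) ^ n * c k).
Proof.
  intros Hl Hc Hratio.
  assert (Hk : forall k, 0 < INR k + 1) by (intros k; pose proof (pos_INR k); lra).
  assert (Hw := is_lim_seq_pow _ _ n is_lim_seq_succ_ratio). rewrite pow1 in Hw.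
  apply ex_series_Rabs, ex_series_DAlembert with l; auto.
  - intros k. apply Rgt_not_eq, Rmult_lt_0_compat; auto. apply pow_lt; auto.
  - eapply is_lim_seq_ext; [|rewrite <- (Rmult_1_l l); exact (is_lim_seq_mult' _ _ _ _ Hw Hratio)].
    intros k. pose proof (Hk (S k)). pose proof (Hk k). pose proof (Hc k). pose proof (Hc (S k)).
    rewrite Rabs_pos_eq.
    + unfold Rdiv. rewrite Rpow_mult_distr, pow_inv.
      field. split; try lra. apply pow_nonzero; lra.
    + apply Rlt_le, Rdiv_lt_0_compat; apply Rmult_lt_0_compat; auto; apply pow_lt; auto.
Qed.

Lemma is_derive_pos_le (F dF : R -> R) (x1 : R) :
  (forall x, x1 <= x -> is_derive F x (dF x)) -> (forall x, x1 <= x -> 0 < dF x) ->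
  forall x, x1 <= x -> F x1 <= F x.
Proof.
  intros HF HdF x Hx. destruct (Req_dec x1 x) as [<-|Hne]; [lra|].
  apply Rlt_le, (incr_function_le F x1 p_infty dF); simpl; try lra;
    intros z Hz _; [apply HF | apply HdF]; auto.
Qed.

Lemma deriv_ratio_linear_bound (f h df dh : R -> R) (x0 l e : R) :
  (forall x, x0 < x -> is_derive f x (df x)) ->
  (forall x, x0 < x -> is_derive h x (dh x)) ->
  (forall x, x0 < x -> 0 < dh x) -> 0 < e ->
  is_lim (fun x => df x / dh x) p_infty l ->
  exists x1 A, forall x, x1 <= x -> Rabs (f x - l * h x) <= e * h x + A.
Proof.
  intros Hf Hh Hdh He Hratio. apply is_lim_spec in Hratio.
  destruct (Hratio (mkposreal e He)) as [M1 HM1]; simpl in HM1.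
  set (x1 := Rmax x0 M1 + 1).
  assert (Hx0 : x0 < x1) by (unfold x1; pose proof (Rmax_l x0 M1); lra).
  assert (HM1x : M1 < x1) by (unfold x1; pose proof (Rmax_r x0 M1); lra).
  (* on [x1, +oo), (l - e) h' < f' < (l + e) h', so f - (l -/+ e) h is monotone *)
  assert (Hbd : forall t, x1 <= t -> (l - e) * dh t < df t < (l + e) * dh t).
  { intros t Ht. pose proof (Hdh t ltac:(lra)).
    specialize (HM1 t ltac:(lra)). apply Rabs_lt_between in HM1.
    replace (df t) with (df t / dh t * dh t) by (field; lra). split; nra. }
  assert (Hlin : forall a b t, x1 <= t ->
            is_derive (fun y => a * f y + b * h y) t (a * df t + b * dh t)).
  { intros a b t Ht. apply @is_derive_plus; apply @is_derive_scal; [apply Hf | apply Hh]; lra. }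
  assert (Hup := is_derive_pos_le _ _ x1 (Hlin (-1) (l + e))
                   ltac:(intros t Ht; specialize (Hbd t Ht); cbv beta; lra)).
  assert (Hlo := is_derive_pos_le _ _ x1 (Hlin 1 (- (l - e)))
                   ltac:(intros t Ht; specialize (Hbd t Ht); cbv beta; lra)).
  exists x1, (Rabs (f x1 - (l + e) * h x1) + Rabs (f x1 - (l - e) * h x1)).
  intros x Hx. specialize (Hup x Hx). specialize (Hlo x Hx).
  pose proof (Rle_abs (f x1 - (l + e) * h x1)). pose proof (Rabs_pos (f x1 - (l + e) * h x1)).
  pose proof (Rabs_maj2 (f x1 - (l - e) * h x1)). pose proof (Rabs_pos (f x1 - (l - e) * h x1)).
  apply Rabs_le_between. lra.
Qed.

Lemma is_lim_Hopital_p_infty (f h df dh : R -> R) (x0 l : R) :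
  (forall x, x0 < x -> is_derive f x (df x)) ->
  (forall x, x0 < x -> is_derive h x (dh x)) ->
  (forall x, x0 < x -> 0 < dh x) ->
  is_lim h p_infty p_infty ->
  is_lim (fun x => df x / dh x) p_infty l ->
  is_lim (fun x => f x / h x) p_infty l.
Proof.
  intros Hf Hh Hdh Hlimh Hratio.
  apply is_lim_spec in Hlimh. apply is_lim_spec.
  intros eps. set (e := eps / 2).
  assert (He : 0 < e) by (unfold e; destruct eps; simpl; lra).
  destruct (deriv_ratio_linear_bound f h df dh x0 l e Hf Hh Hdh He Hratio) as [x1 [A HA]].
  destruct (Hlimh (Rmax 0 (A / e))) as [M2 HM2].
  exists (Rmax x1 M2). intros x Hx. apply Rmax_Rlt in Hx as [Hx1 Hx2].
  specialize (HM2 x Hx2). apply Rmax_Rlt in HM2 as [Hhx HAh].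
  specialize (HA x ltac:(lra)).
  apply Rlt_div_l in HAh; [|lra].
  replace (f x / h x - l) with ((f x - l * h x) / h x) by (field; lra).
  unfold Rdiv. rewrite Rabs_mult, Rabs_inv, (Rabs_pos_eq (h x)) by lra.
  apply Rlt_div_l; [lra|]. replace (pos eps) with (2 * e) by (unfold e; field). lra.
Qed.

Lemma pow_deviations_small (n : nat) (eps : R) : 0 < eps ->
  exists d, 0 < d < 1 /\ 1 - eps < (1 - d) ^ S n /\ (1 + d) ^ n + d < 1 + eps.
Proof.
  intros Heps.
  assert (Hnear : forall f : R -> R, continuity_pt f 0 -> f 0 = 1 ->
                  locally 0 (fun d => 1 - eps < f d < 1 + eps)).
  { intros f Hf Hf0.
    apply (proj1 (continuity_pt_locally f 0)) with (eps := mkposreal eps Heps) in Hf.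
    refine (filter_imp _ _ _ Hf). intros d Hd. rewrite Hf0 in Hd.
    apply Rabs_lt_between' in Hd. exact Hd. }
  assert (Hlo := Hnear (fun d => (1 - d) ^ S n) ltac:(reg)
                       ltac:(cbv beta; rewrite Rminus_0_r; apply pow1)).
  assert (Hup := Hnear (fun d => (1 + d) ^ n + d) ltac:(reg)
                       ltac:(cbv beta; rewrite !Rplus_0_r; apply pow1)).
  assert (Hsmall := locally_ball (T := R_UniformSpace) 0 (mkposreal 1 Rlt_0_1)).
  destruct (filter_and _ _ Hlo (filter_and _ _ Hup Hsmall)) as [delta Hdelta].
  assert (Hd : ball 0 delta (delta / 2)).
  { change (Rabs (delta / 2 - 0) < delta). pose proof (cond_pos delta).
    rewrite Rminus_0_r, Rabs_pos_eq; lra. }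
  destruct (Hdelta (delta / 2) Hd) as [Hd1 [Hd2 Hd3]].
  change (Rabs (delta / 2 - 0) < 1) in Hd3. rewrite Rminus_0_r in Hd3.
  exists (delta / 2). pose proof (cond_pos delta). apply Rabs_lt_between in Hd3.
  repeat split; lra.
Qed.

Lemma filterlim_1_of_pow_bounds {T : Type} (F : (T -> Prop) -> Prop) {FF : Filter F}
  (u : T -> R) (n : nat) :
  (forall d, 0 < d < 1 -> F (fun x => (1 - d) ^ S n <= u x <= (1 + d) ^ n + d)) ->
  filterlim u F (locally 1).
Proof.
  intros Hbounds. apply filterlim_locally. intros eps.
  destruct (pow_deviations_small n eps (cond_pos eps)) as [d [Hd [Hlo Hup]]].
  refine (filter_imp _ _ _ (Hbounds d Hd)). intros x Hx.
  apply (Rabs_lt_between' (u x) 1 eps). lra.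
Qed.

Lemma is_lim_scal_l_p_infty (f : R -> R) (a : R) :
  0 < a -> is_lim f p_infty p_infty -> is_lim (fun x => a * f x) p_infty p_infty.
Proof.
  intros Ha Hf.
  replace p_infty with (Rbar_mult a p_infty) at 2
    by (apply is_Rbar_mult_unique, is_Rbar_mult_sym, is_Rbar_mult_p_infty_pos; simpl; lra).
  apply is_lim_scal_l; auto.
Qed.

Lemma Rpower_pos (x y : R) : 0 < Rpower x y.
Proof. apply exp_pos. Qed.

Lemma is_lim_Rpower_p_infty (a : R) : 0 < a -> is_lim (fun x => Rpower x a) p_infty p_infty.
Proof.
  intros Ha. unfold Rpower.
  apply (is_lim_comp exp (fun x => a * ln x) p_infty p_infty p_infty).
  - apply is_lim_exp_p.
  - apply is_lim_scal_l_p_infty; auto. apply is_lim_ln_p.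
  - exists 0. intros; discriminate.
Qed.

Definition geom_moment (n : nat) (r : R) : R := Series (fun j => (INR j + 1) ^ n * r ^ j).

Lemma ex_series_geom_moment (n : nat) (r : R) :
  0 < r < 1 -> ex_series (fun j => (INR j + 1) ^ n * r ^ j).
Proof.
  intros Hr. apply ex_series_pow_succ_mul with r; [lra | intros; apply pow_lt; lra |].
  eapply is_lim_seq_ext; [|apply is_lim_seq_const].
  intros k; simpl. field. apply pow_nonzero; lra.
Qed.

Lemma geom_moment_ge_0 (n : nat) (r : R) : 0 < r < 1 -> 0 <= geom_moment n r.
Proof.
  intros Hr. apply Series_ge_0; [|apply ex_series_geom_moment; auto].
  intros j. pose proof (pos_INR j). apply Rmult_le_pos; apply pow_le; lra.
Qed.

Section RatioBounds.

Variable a : nat -> R.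
Hypothesis a_ge0 : forall k, 0 <= a k.

Lemma ratio_le_pow_up (r : R) (m : nat) :
  0 <= r -> (forall k, (m <= k)%nat -> a (S k) <= r * a k) ->
  forall j, a (m + j) <= r ^ j * a m.
Proof.
  intros Hr Hratio j. induction j as [|j IH]; simpl.
  - rewrite Nat.add_0_r. lra.
  - rewrite Nat.add_succ_r. eapply Rle_trans; [apply Hratio; lia|].
    rewrite Rmult_assoc. apply Rmult_le_compat_l; auto.
Qed.

Lemma ratio_le_pow_down (rho : R) (m : nat) :
  0 <= rho -> (forall k, (k < m)%nat -> a k <= rho * a (S k)) ->
  forall k, (k <= m)%nat -> a k <= rho ^ (m - k) * a m.
Proof.
  intros Hrho Hratio k Hk. replace k with (m - (m - k))%nat at 1 by lia.
  generalize (m - k)%nat (Nat.le_sub_l m k). intros i. induction i as [|i IH]; intros Hi; simpl.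
  - rewrite Nat.sub_0_r. lra.
  - eapply Rle_trans; [apply Hratio; lia|].
    replace (S (m - S i)) with (m - i)%nat by lia.
    rewrite Rmult_assoc. apply Rmult_le_compat_l; auto. apply IH; lia.
Qed.

Variable n : nat.
Hypothesis a_summable : ex_series a.
Hypothesis a_moment_summable : ex_series (fun k => INR k ^ n * a k).

Lemma sum_f_R0_pow_mul_le (K : nat) :
  sum_f_R0 (fun k => INR k ^ n * a k) K <= INR K ^ n * Series a.
Proof.
  apply Rle_trans with (sum_f_R0 (fun k => a k * INR K ^ n) K).
  - apply sum_Rle. intros k Hk. rewrite Rmult_comm. apply Rmult_le_compat_l; auto.
    apply pow_incr. split; [apply pos_INR | apply le_INR; auto].
  - rewrite <- scal_sum. apply Rmult_le_compat_l; [apply pow_le, pos_INR|].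
    apply sum_f_R0_le_Series; auto.
Qed.

Lemma Series_tail_pow_mul_le (r : R) (m K : nat) :
  0 < r < 1 -> (forall k, (m <= k)%nat -> a (S k) <= r * a k) -> (m <= S K)%nat ->
  Series (fun j => INR (S K + j) ^ n * a (S K + j)) <=
  INR (S K) ^ n * r ^ (S K - m) * geom_moment n r * Series a.
Proof.
  intros Hr Hratio HmK. unfold geom_moment.
  assert (Ham : a m <= Series a) by (apply term_le_Series; auto).
  replace (INR (S K) ^ n * r ^ (S K - m) * Series (fun j => (INR j + 1) ^ n * r ^ j) * Series a)
    with (Series (fun j => (INR (S K) ^ n * r ^ (S K - m) * Series a) * ((INR j + 1) ^ n * r ^ j)))
    by (rewrite Series_scal_l; ring).
  apply Series_le; [|apply (ex_series_scal_l (V := R_NormedModule)), ex_series_geom_moment; auto].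
  intros j. split; [apply Rmult_le_pos; auto; apply pow_le, pos_INR|].
  assert (Hpos : 0 <= INR j) by apply pos_INR.
  assert (Hdecay : a (S K + j) <= r ^ (S K - m) * r ^ j * Series a).
  { replace (S K + j)%nat with (m + (S K - m + j))%nat by lia.
    eapply Rle_trans; [apply ratio_le_pow_up with (r := r); auto; lra|].
    rewrite pow_add. apply Rmult_le_compat_l; auto.
    apply Rmult_le_pos; apply pow_le; lra. }
  assert (Hweight : INR (S K + j) ^ n <= INR (S K) ^ n * (INR j + 1) ^ n).
  { rewrite <- Rpow_mult_distr. apply pow_incr. split; [apply pos_INR|].
    rewrite plus_INR, S_INR. pose proof (pos_INR K). nra. }
  replace (INR (S K) ^ n * r ^ (S K - m) * Series a * ((INR j + 1) ^ n * r ^ j))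
    with ((INR (S K) ^ n * (INR j + 1) ^ n) * (r ^ (S K - m) * r ^ j * Series a)) by ring.
  apply Rmult_le_compat; auto. apply pow_le, pos_INR.
Qed.

Lemma Series_pow_mul_le (r : R) (m K : nat) :
  0 < r < 1 -> (forall k, (m <= k)%nat -> a (S k) <= r * a k) -> (m <= S K)%nat ->
  Series (fun k => INR k ^ n * a k) <=
  (INR K ^ n + INR (S K) ^ n * r ^ (S K - m) * geom_moment n r) * Series a.
Proof.
  intros Hr Hratio HmK.
  rewrite (Series_incr_n _ (S K)) by (auto; lia). simpl pred.
  pose proof (sum_f_R0_pow_mul_le K). pose proof (Series_tail_pow_mul_le r m K Hr Hratio HmK).
  lra.
Qed.

Lemma sum_f_R0_le_pow_Series (rho : R) (L m : nat) :
  0 <= rho < 1 -> (forall k, (k < m)%nat -> a k <= rho * a (S k)) -> (L <= m)%nat ->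
  sum_f_R0 a L <= rho ^ (m - L) / (1 - rho) * Series a.
Proof.
  intros Hrho Hratio HLm.
  apply Rle_trans with (sum_f_R0 (fun k => rho ^ (m - k) * a m) L).
  - apply sum_Rle. intros k Hk. apply ratio_le_pow_down; auto; [lra | lia].
  - rewrite <- (scal_sum (fun k => rho ^ (m - k)) L (a m)), Rmult_comm.
    apply Rmult_le_compat.
    + apply cond_pos_sum. intros; apply pow_le; lra.
    + auto.
    + apply sum_f_R0_pow_sub_le; auto.
    + apply term_le_Series; auto.
Qed.

Lemma Series_pow_mul_ge (L : nat) :
  INR (S L) ^ n * (Series a - sum_f_R0 a L) <= Series (fun k => INR k ^ n * a k).
Proof.
  rewrite (Series_incr_n a (S L)), (Series_incr_n (fun k => INR k ^ n * a k) (S L))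
    by (auto; lia).
  simpl pred.
  replace (sum_f_R0 a L + Series (fun k => a (S L + k)) - sum_f_R0 a L)
    with (Series (fun k => a (S L + k))) by ring.
  rewrite <- Series_scal_l.
  assert (0 <= sum_f_R0 (fun k => INR k ^ n * a k) L).
  { apply cond_pos_sum. intros k; apply Rmult_le_pos; auto; apply pow_le, pos_INR. }
  assert (Series (fun k => INR (S L) ^ n * a (S L + k)) <=
          Series (fun k => INR (S L + k) ^ n * a (S L + k))).
  { apply Series_le.
    - intros k. split; [apply Rmult_le_pos; auto; apply pow_le, pos_INR|].
      apply Rmult_le_compat_r; auto. apply pow_incr. split; [apply pos_INR|].
      apply le_INR; lia.
    - exact (proj1 (ex_series_incr_n _ (S L)) a_moment_summable). }
  lra.
Qed.

End RatioBounds.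

Section PartitionFunction.

Variables (g : nat -> R) (alpha : R).
Hypothesis g_pos : forall k, 0 < g (S k).
Hypothesis g_mono : forall m n, (m <= n)%nat -> g m <= g n.
Hypothesis alpha_pos : 0 < alpha.
Hypothesis g_equiv : is_lim_seq (fun k => g k / Rpower (INR k) alpha) 1.

Definition Zterm (phi : R) (k : nat) : R := phi ^ k / gfact g k.

Lemma gfact_pos (k : nat) : 0 < gfact g k.
Proof.
  induction k as [|k IH]; simpl; [lra|]. apply Rmult_lt_0_compat; auto.
Qed.

Lemma Zterm_pos (phi : R) (k : nat) : 0 < phi -> 0 < Zterm phi k.
Proof. intros Hphi. apply Rdiv_lt_0_compat; [apply pow_lt; auto | apply gfact_pos]. Qed.

Lemma Zterm_S (phi : R) (k : nat) : Zterm phi (S k) = Zterm phi k * (phi / g (S k)).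
Proof.
  unfold Zterm; simpl. pose proof (gfact_pos k). pose proof (g_pos k). field. lra.
Qed.

Lemma is_lim_seq_g : is_lim_seq g p_infty.
Proof.
  assert (Hpow : is_lim_seq (fun k => Rpower (INR k) alpha) p_infty).
  { apply (is_lim_comp_seq (fun x => Rpower x alpha) INR p_infty).
    - apply is_lim_Rpower_p_infty; auto.
    - exists O. intros; discriminate.
    - apply is_lim_seq_INR. }
  eapply is_lim_seq_ext; [|apply (is_lim_seq_mult _ _ _ _ _ g_equiv Hpow)].
  - intros k; simpl. field. apply Rgt_not_eq, Rpower_pos.
  - apply is_Rbar_mult_sym, is_Rbar_mult_p_infty_pos. simpl; lra.
Qed.

Lemma ex_series_pow_mul_Zterm (n : nat) (phi : R) :
  0 < phi -> ex_series (fun k => INR k ^ n * Zterm phi k).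
Proof.
  intros Hphi.
  apply (ex_series_le (V := R_CompleteNormedModule)) with (fun k => (INR k + 1) ^ n * Zterm phi k).
  - intros k. change norm with Rabs.
    pose proof (pos_INR k). pose proof (Zterm_pos phi k Hphi).
    rewrite Rabs_pos_eq by (apply Rmult_le_pos; [apply pow_le|]; lra).
    apply Rmult_le_compat_r; [lra|]. apply pow_incr; lra.
  - apply ex_series_pow_succ_mul with 0; [lra | intros; apply Zterm_pos; auto|].
    apply is_lim_seq_ext with (fun k => phi * / g (S k)).
    + intros k. rewrite Zterm_S. pose proof (g_pos k). pose proof (Zterm_pos phi k Hphi).
      field. split; lra.
    + replace (Finite 0) with (Rbar_mult phi (Rbar_inv p_infty)) by (simpl; f_equal; ring).
      apply is_lim_seq_scal_l, is_lim_seq_inv; [|discriminate].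
      exact (proj1 (is_lim_seq_incr_1 g p_infty) is_lim_seq_g).
Qed.

Lemma ex_series_Zterm (phi : R) : 0 < phi -> ex_series (Zterm phi).
Proof.
  intros Hphi. eapply ex_series_ext; [|exact (ex_series_pow_mul_Zterm 0 phi Hphi)].
  intros k; simpl; ring.
Qed.

Lemma Zpart_ge_1 (phi : R) : 0 < phi -> 1 <= Zpart g phi.
Proof.
  intros Hphi. replace 1 with (Zterm phi 0) by (unfold Zterm; simpl; field).
  apply term_le_Series; [intros k; apply Rlt_le, Zterm_pos; auto | apply ex_series_Zterm; auto].
Qed.

Lemma moment_Zterm (phi : R) (n : nat) : 0 < phi ->
  moment g phi n = Series (fun k => INR k ^ n * Zterm phi k) / Zpart g phi.
Proof.
  intros Hphi. pose proof (Zpart_ge_1 phi Hphi).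
  unfold moment, Pphi. unfold Rdiv at 2. rewrite Rmult_comm, <- Series_scal_l.
  apply Series_ext. intros k. unfold Zterm. pose proof (gfact_pos k). field. lra.
Qed.

Definition scale (phi : R) : R := Rpower phi (1 / alpha).

Lemma scale_pow (phi : R) (n : nat) : 0 < phi -> Rpower phi (INR n / alpha) = scale phi ^ n.
Proof.
  intros Hphi. unfold scale. rewrite <- Rpower_pow by apply Rpower_pos.
  rewrite Rpower_mult. f_equal. field. lra.
Qed.

Lemma Rpower_mul_scale (c phi : R) : 0 < c -> 0 < phi ->
  Rpower (c * scale phi) alpha = Rpower c alpha * phi.
Proof.
  intros Hc Hphi. unfold scale.
  rewrite <- Rpower_mult_distr, Rpower_mult by (auto; apply Rpower_pos).
  replace (1 / alpha * alpha) with 1 by (field; lra). rewrite Rpower_1; auto.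
Qed.

Lemma eventually_scale_gt (B : R) : Rbar_locally p_infty (fun phi => 0 < phi /\ B < scale phi).
Proof.
  assert (Hscale : is_lim scale p_infty p_infty).
  { apply is_lim_Rpower_p_infty. apply Rdiv_lt_0_compat; lra. }
  apply is_lim_spec in Hscale. destruct (Hscale B) as [M HM].
  exists (Rmax 0 M). intros phi Hphi. apply Rmax_Rlt in Hphi as [H0 HM'].
  split; auto.
Qed.

Lemma g_equiv_bounds (q : R) : 0 < q < 1 ->
  exists N, forall k, (N <= k)%nat ->
    q * Rpower (INR k) alpha < g k < Rpower (INR k) alpha / q.
Proof.
  intros Hq. apply is_lim_seq_spec in g_equiv.
  destruct (g_equiv (mkposreal (1 - q) ltac:(lra))) as [N HN]. exists N. intros k Hk.
  specialize (HN k Hk). simpl in HN. apply Rabs_lt_between in HN.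
  pose proof (Rpower_pos (INR k) alpha).
  assert (2 - q <= / q).
  { apply (Rmult_le_reg_l q); [lra|]. rewrite Rinv_r by lra. nra. }
  replace (Rpower (INR k) alpha / q) with (/ q * Rpower (INR k) alpha) by (field; lra).
  replace (g k) with (g k / Rpower (INR k) alpha * Rpower (INR k) alpha) by (field; lra).
  split; apply Rmult_lt_compat_r; lra.
Qed.

Lemma g_ratio_above (c : R) : 1 < c ->
  exists r, 0 < r < 1 /\ Rbar_locally p_infty
    (fun phi => 0 < phi /\ forall k, c * scale phi <= INR k -> phi <= r * g k).
Proof.
  intros Hc. set (C := Rpower c alpha).
  assert (HC : 1 < C) by (unfold C; rewrite <- (Rpower_O c) by lra; apply Rpower_lt; lra).
  set (q := (C + 1) / (2 * C)).
  destruct (g_equiv_bounds q) as [N HN].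
  { unfold q. split; [apply Rdiv_lt_0_compat | apply Rlt_div_l]; lra. }
  exists (2 / (C + 1)). split.
  { split; [apply Rdiv_lt_0_compat | apply Rlt_div_l]; lra. }
  refine (filter_imp _ _ _ (eventually_scale_gt (INR N / c))).
  intros phi [Hphi HT]. split; auto. intros k Hk.
  assert (HNk : (N <= k)%nat).
  { apply INR_le. apply Rlt_div_l in HT; lra. }
  assert (Hpow : C * phi <= Rpower (INR k) alpha).
  { unfold C. rewrite <- Rpower_mul_scale by lra.
    apply Rle_Rpower_l; [lra|]. split; auto. apply Rmult_lt_0_compat; [lra | apply Rpower_pos]. }
  assert (Hg : q * (C * phi) < g k).
  { apply Rle_lt_trans with (q * Rpower (INR k) alpha); [|apply HN; auto].
    apply Rmult_le_compat_l; auto. unfold q. apply Rlt_le, Rdiv_lt_0_compat; lra. }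
  replace (q * (C * phi)) with ((C + 1) / 2 * phi) in Hg by (unfold q; field; lra).
  replace (2 / (C + 1) * g k) with (g k / ((C + 1) / 2)) by (field; lra).
  apply Rle_div_r; lra.
Qed.

Lemma g_ratio_below (c : R) : 0 < c < 1 ->
  exists rho, 0 < rho < 1 /\ Rbar_locally p_infty
    (fun phi => 0 < phi /\ forall k, INR k <= c * scale phi -> g k <= rho * phi).
Proof.
  intros Hc. set (C := Rpower c alpha).
  assert (HC : 0 < C < 1).
  { split; [apply Rpower_pos|]. unfold C, Rpower. rewrite <- exp_0. apply exp_increasing.
    assert (ln c < 0) by (rewrite <- ln_1; apply ln_increasing; lra). nra. }
  set (q := 2 * C / (C + 1)).
  destruct (g_equiv_bounds q) as [N HN].
  { unfold q. split; [apply Rdiv_lt_0_compat | apply Rlt_div_l]; lra. }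
  set (rho := (C + 1) / 2).
  exists rho. split; [unfold rho; lra|].
  exists (Rmax 0 (g N / rho)). intros phi Hphi. apply Rmax_Rlt in Hphi as [Hphi HgNphi].
  split; auto. intros k Hk.
  destruct (Compare_dec.le_lt_dec k N) as [HkN | HNk].
  - apply Rle_trans with (g N); [apply g_mono; auto|].
    apply Rlt_div_l in HgNphi; unfold rho in *; lra.
  - assert (Hpow : Rpower (INR k) alpha <= C * phi).
    { unfold C. rewrite <- Rpower_mul_scale by lra.
      apply Rle_Rpower_l; [lra|]. split; auto. apply lt_0_INR; lia. }
    apply Rlt_le, Rlt_le_trans with (Rpower (INR k) alpha / q); [apply HN; lia|].
    replace (rho * phi) with (C * phi / q) by (unfold rho, q; field; lra).
    apply Rmult_le_compat_r; auto. apply Rlt_le, Rinv_0_lt_compat. unfold q.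
    apply Rdiv_lt_0_compat; lra.
Qed.

Lemma Zterm_S_le (phi r : R) (k : nat) :
  0 < phi -> phi <= r * g (S k) -> Zterm phi (S k) <= r * Zterm phi k.
Proof.
  intros Hphi Hk. rewrite Zterm_S, Rmult_comm. pose proof (Zterm_pos phi k Hphi).
  apply Rmult_le_compat_r; [lra|]. pose proof (g_pos k).
  apply Rmult_le_reg_r with (g (S k)); [lra|].
  unfold Rdiv. rewrite Rmult_assoc, Rinv_l, Rmult_1_r by lra. lra.
Qed.

Lemma Zterm_le_S (phi rho : R) (k : nat) :
  0 < phi -> g (S k) <= rho * phi -> Zterm phi k <= rho * Zterm phi (S k).
Proof.
  intros Hphi Hk. rewrite Zterm_S. pose proof (Zterm_pos phi k Hphi). pose proof (g_pos k).
  replace (rho * (Zterm phi k * (phi / g (S k)))) with (Zterm phi k * (rho * phi / g (S k)))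
    by (field; lra).
  rewrite <- (Rmult_1_r (Zterm phi k)) at 1. apply Rmult_le_compat_l; [lra|].
  apply Rmult_le_reg_r with (g (S k)); [lra|].
  unfold Rdiv. rewrite Rmult_assoc, Rinv_l by lra. lra.
Qed.

Lemma moment_sum_le_at (n J : nat) (phi r d : R) :
  0 < phi -> 0 < r < 1 -> 0 < d < 1 -> 1 < scale phi -> 2 * INR J / d < scale phi ->
  (forall k, (1 + d / 2) * scale phi <= INR k -> phi <= r * g k) ->
  exists e, (J <= e)%nat /\
    Series (fun k => INR k ^ n * Zterm phi k) <=
    ((1 + d) ^ n + 3 ^ n * (r ^ e * geom_moment n r)) * scale phi ^ n * Zpart g phi.
Proof.
  intros Hphi Hr Hd HT1 HTJ Hratio. set (T := scale phi) in *.
  destruct (nfloor_ex ((1 + d / 2) * T)) as [m Hm]; [nra|].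
  destruct (nfloor_ex ((1 + d) * T)) as [K HK]; [nra|].
  assert (HJT : INR J < d / 2 * T).
  { apply Rmult_lt_compat_l with (r := d / 2) in HTJ; [|lra].
    replace (d / 2 * (2 * INR J / d)) with (INR J) in HTJ by (field; lra). lra. }
  assert (HmJK : (m + J < S K)%nat) by (apply INR_lt; rewrite plus_INR, S_INR; nra).
  exists (S K - m)%nat. split; [lia|].
  eapply Rle_trans.
  { apply (Series_pow_mul_le (Zterm phi)) with (r := r) (m := m) (K := K); auto; try lia.
    - intros k; apply Rlt_le, Zterm_pos; auto.
    - apply ex_series_Zterm; auto.
    - apply ex_series_pow_mul_Zterm; auto.
    - intros k Hk. apply Zterm_S_le; auto.
      apply Hratio. rewrite S_INR. apply le_INR in Hk. lra. }
  assert (HZ : 0 <= Zpart g phi) by (pose proof (Zpart_ge_1 phi Hphi); lra).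
  apply Rmult_le_compat_r; auto.
  assert (HG : 0 <= r ^ (S K - m) * geom_moment n r).
  { apply Rmult_le_pos; [apply pow_le; lra | apply geom_moment_ge_0; auto]. }
  assert (INR K ^ n <= (1 + d) ^ n * T ^ n).
  { rewrite <- Rpow_mult_distr. apply pow_incr. split; [apply pos_INR | lra]. }
  assert (INR (S K) ^ n <= 3 ^ n * T ^ n).
  { rewrite <- Rpow_mult_distr. apply pow_incr. split; [apply pos_INR|]. rewrite S_INR. nra. }
  rewrite Rmult_assoc. nra.
Qed.

Lemma moment_sum_ge_at (n J : nat) (phi rho d : R) :
  0 < phi -> 0 < rho < 1 -> 0 < d < 1 -> 2 * (INR J + 1) / d < scale phi ->
  (forall k, INR k <= (1 - d / 2) * scale phi -> g k <= rho * phi) ->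
  exists e, (J <= e)%nat /\
    ((1 - d) * scale phi) ^ n * (1 - rho ^ e / (1 - rho)) * Zpart g phi <=
    Series (fun k => INR k ^ n * Zterm phi k).
Proof.
  intros Hphi Hrho Hd HTJ Hratio. set (T := scale phi) in *.
  assert (HT : 0 < T) by apply Rpower_pos.
  destruct (nfloor_ex ((1 - d) * T)) as [L HL]; [nra|].
  destruct (nfloor_ex ((1 - d / 2) * T)) as [m Hm]; [nra|].
  assert (HJT : INR J + 1 < d / 2 * T).
  { apply Rmult_lt_compat_l with (r := d / 2) in HTJ; [|lra].
    replace (d / 2 * (2 * (INR J + 1) / d)) with (INR J + 1) in HTJ by (field; lra). lra. }
  assert (HLJm : (L + J < m)%nat) by (apply INR_lt; rewrite plus_INR; nra).
  exists (m - L)%nat. split; [lia|].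
  assert (Hnn : forall k, 0 <= Zterm phi k) by (intros k; apply Rlt_le, Zterm_pos; auto).
  assert (Hhead : sum_f_R0 (Zterm phi) L <= rho ^ (m - L) / (1 - rho) * Zpart g phi).
  { apply sum_f_R0_le_pow_Series; auto; [apply ex_series_Zterm; auto | lra | | lia].
    intros k Hk. apply Zterm_le_S; auto. apply Hratio. apply le_INR in Hk. lra. }
  assert (Hrest : 0 <= Zpart g phi - sum_f_R0 (Zterm phi) L).
  { pose proof (sum_f_R0_le_Series (Zterm phi) L Hnn (ex_series_Zterm phi Hphi)).
    change (Zpart g phi) with (Series (Zterm phi)). lra. }
  apply Rle_trans with (INR (S L) ^ n * (Zpart g phi - sum_f_R0 (Zterm phi) L)).
  2: { apply (Series_pow_mul_ge (Zterm phi) Hnn n);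
       [apply ex_series_Zterm | apply ex_series_pow_mul_Zterm]; auto. }
  assert (HLn : 0 <= ((1 - d) * T) ^ n <= INR (S L) ^ n).
  { split; [apply pow_le; nra|]. apply pow_incr. rewrite S_INR. split; nra. }
  apply Rle_trans with (((1 - d) * T) ^ n * (Zpart g phi - sum_f_R0 (Zterm phi) L)).
  - rewrite Rmult_assoc. apply Rmult_le_compat_l; lra.
  - apply Rmult_le_compat_r; lra.
Qed.

Lemma moment_upper (n : nat) (d : R) : 0 < d < 1 ->
  Rbar_locally p_infty (fun phi =>
    Series (fun k => INR k ^ n * Zterm phi k) <= ((1 + d) ^ n + d) * scale phi ^ n * Zpart g phi).
Proof.
  intros Hd.
  destruct (g_ratio_above (1 + d / 2) ltac:(lra)) as [r [Hr Hev]].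
  set (G := geom_moment n r).
  assert (HG : 0 <= G) by (apply geom_moment_ge_0; auto).
  assert (H3 : 0 <= 3 ^ n) by (apply pow_le; lra).
  destruct (pow_lt_1_zero r ltac:(rewrite Rabs_pos_eq; lra) (d / (3 ^ n * G + 1))) as [J HJ].
  { apply Rdiv_lt_0_compat; nra. }
  refine (filter_imp _ _ _ (filter_and _ _ Hev (eventually_scale_gt (Rmax 1 (2 * INR J / d))))).
  intros phi [[Hphi Hratio] [_ HT]]. apply Rmax_Rlt in HT as [HT1 HTJ].
  destruct (moment_sum_le_at n J phi r d) as [e [HJe Hbound]]; auto.
  eapply Rle_trans; [exact Hbound|].
  specialize (HJ e HJe). rewrite Rabs_pos_eq in HJ by (apply pow_le; lra).
  assert (HXG : 3 ^ n * (r ^ e * G) <= d).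
  { apply Rmult_lt_compat_r with (r := 3 ^ n * G + 1) in HJ; [|nra].
    replace (d / (3 ^ n * G + 1) * (3 ^ n * G + 1)) with d in HJ by (field; nra).
    pose proof (pow_le r e ltac:(lra)). nra. }
  pose proof (Zpart_ge_1 phi Hphi). pose proof (pow_lt (scale phi) n (Rpower_pos _ _)).
  fold G. apply Rmult_le_compat_r; [lra|]. apply Rmult_le_compat_r; lra.
Qed.

Lemma moment_lower (n : nat) (d : R) : 0 < d < 1 ->
  Rbar_locally p_infty (fun phi =>
    (1 - d) ^ S n * scale phi ^ n * Zpart g phi <= Series (fun k => INR k ^ n * Zterm phi k)).
Proof.
  intros Hd.
  destruct (g_ratio_below (1 - d / 2) ltac:(lra)) as [rho [Hrho Hev]].
  destruct (pow_lt_1_zero rho ltac:(rewrite Rabs_pos_eq; lra) (d * (1 - rho))) as [J HJ].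
  { apply Rmult_lt_0_compat; lra. }
  refine (filter_imp _ _ _ (filter_and _ _ Hev (eventually_scale_gt (2 * (INR J + 1) / d)))).
  intros phi [[Hphi Hratio] [_ HTJ]].
  destruct (moment_sum_ge_at n J phi rho d) as [e [HJe Hbound]]; auto.
  eapply Rle_trans; [|exact Hbound].
  specialize (HJ e HJe). rewrite Rabs_pos_eq in HJ by (apply pow_le; lra).
  assert (Htail : 1 - d <= 1 - rho ^ e / (1 - rho)).
  { assert (rho ^ e / (1 - rho) < d).
    { apply Rmult_lt_reg_r with (1 - rho); [lra|].
      unfold Rdiv. rewrite Rmult_assoc, Rinv_l by lra. lra. }
    lra. }
  pose proof (Zpart_ge_1 phi Hphi).
  assert (0 <= ((1 - d) * scale phi) ^ n).
  { apply pow_le. pose proof (Rpower_pos phi (1 / alpha)). unfold scale. nra. }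
  replace ((1 - d) ^ S n * scale phi ^ n) with (((1 - d) * scale phi) ^ n * (1 - d))
    by (rewrite Rpow_mult_distr; simpl; ring).
  apply Rmult_le_compat_r; [lra|]. apply Rmult_le_compat_l; lra.
Qed.

Lemma is_lim_moment (n : nat) :
  is_lim (fun phi => moment g phi n / Rpower phi (INR n / alpha)) p_infty 1.
Proof.
  apply (filterlim_1_of_pow_bounds (Rbar_locally p_infty) _ n). intros d Hd.
  refine (filter_imp _ _ _ (filter_and _ _ (moment_upper n d Hd)
            (filter_and _ _ (moment_lower n d Hd) (eventually_scale_gt 0)))).
  intros phi [Hup [Hlo [Hphi _]]].
  rewrite moment_Zterm, scale_pow by auto.
  pose proof (Zpart_ge_1 phi Hphi).
  assert (0 < scale phi ^ n) by (apply pow_lt, Rpower_pos).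
  set (M := Series (fun k => INR k ^ n * Zterm phi k)) in *.
  replace (M / Zpart g phi / scale phi ^ n) with (M / (scale phi ^ n * Zpart g phi))
    by (field; lra).
  assert (HD : 0 < scale phi ^ n * Zpart g phi) by nra.
  split; [apply Rmult_le_reg_r with (scale phi ^ n * Zpart g phi) |
          apply Rmult_le_reg_r with (scale phi ^ n * Zpart g phi)]; auto;
    unfold Rdiv; rewrite Rmult_assoc, Rinv_l, Rmult_1_r by lra; lra.
Qed.

Lemma Zpart_PSeries (phi : R) : Zpart g phi = PSeries (fun k => / gfact g k) phi.
Proof. apply Series_ext. intros k. unfold Rdiv. ring. Qed.

Lemma CV_radius_Zpart : CV_radius (fun k => / gfact g k) = p_infty.
Proof.
  apply CV_radius_infinite_DAlembert.
  - intros k. apply Rgt_not_eq, Rinv_0_lt_compat, gfact_pos.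
  - apply is_lim_seq_ext with (fun k => / g (S k)).
    + intros k. simpl. pose proof (gfact_pos k). pose proof (g_pos k).
      rewrite Rabs_pos_eq; [field; lra|].
      apply Rlt_le, Rdiv_lt_0_compat; apply Rinv_0_lt_compat; nra.
    + replace (Finite 0) with (Rbar_inv p_infty) by reflexivity.
      apply is_lim_seq_inv; [|discriminate].
      exact (proj1 (is_lim_seq_incr_1 g p_infty) is_lim_seq_g).
Qed.

Lemma is_derive_Zpart (phi : R) : 0 < phi ->
  is_derive (Zpart g) phi (Series (fun k => INR k ^ 1 * Zterm phi k) / phi).
Proof.
  intros Hphi.
  assert (Hmean : Series (fun k => INR k ^ 1 * Zterm phi k) =
                  phi * PSeries (PS_derive (fun k => / gfact g k)) phi).
  { rewrite Series_incr_1 by (apply ex_series_pow_mul_Zterm; auto).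
    simpl INR at 1. rewrite pow_i, Rmult_0_l, Rplus_0_l by lia.
    unfold PSeries. rewrite <- Series_scal_l. apply Series_ext. intros k.
    unfold PS_derive, Zterm. simpl. pose proof (gfact_pos k). pose proof (g_pos k).
    field. lra. }
  rewrite Hmean. replace (phi * PSeries (PS_derive (fun k => / gfact g k)) phi / phi)
    with (PSeries (PS_derive (fun k => / gfact g k)) phi) by (field; lra).
  apply is_derive_ext with (PSeries (fun k => / gfact g k)).
  { intros x; symmetry; apply Zpart_PSeries. }
  apply is_derive_PSeries. rewrite CV_radius_Zpart. exact I.
Qed.

Lemma is_derive_ln_Zpart (phi : R) : 0 < phi ->
  is_derive (fun x => ln (Zpart g x)) phi (moment g phi 1 / phi).
Proof.
  intros Hphi. pose proof (Zpart_ge_1 phi Hphi).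
  rewrite moment_Zterm by auto.
  replace (Series (fun k => INR k ^ 1 * Zterm phi k) / Zpart g phi / phi)
    with (Series (fun k => INR k ^ 1 * Zterm phi k) / phi * / Zpart g phi) by (field; lra).
  apply (is_derive_comp ln (Zpart g)); [apply is_derive_ln; lra | apply is_derive_Zpart; auto].
Qed.

Lemma is_lim_ln_Zpart :
  is_lim (fun phi => ln (Zpart g phi) / (alpha * Rpower phi (1 / alpha))) p_infty 1.
Proof.
  apply (is_lim_Hopital_p_infty _ _ (fun phi => moment g phi 1 / phi)
           (fun phi => Rpower phi (1 / alpha - 1)) 0).
  - apply is_derive_ln_Zpart.
  - intros x Hx.
    replace (Rpower x (1 / alpha - 1)) with (alpha * (1 / alpha * Rpower x (1 / alpha - 1)))
      by (field; lra).
    apply @is_derive_scal, is_derive_Reals, derivable_pt_lim_power; auto.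
  - intros x _. apply Rpower_pos.
  - apply is_lim_scal_l_p_infty, is_lim_Rpower_p_infty; auto. apply Rdiv_lt_0_compat; lra.
  - apply is_lim_ext_loc with (fun phi => moment g phi 1 / Rpower phi (INR 1 / alpha));
      [|apply is_lim_moment].
    exists 0. intros x Hx. simpl INR.
    unfold Rminus. rewrite Rpower_plus, Rpower_Ropp, Rpower_1 by auto.
    pose proof (Rpower_pos x (1 / alpha)). field. lra.
Qed.

Lemma is_lim_variance : is_lim (fun phi => variance g phi / Rpower phi (2 / alpha)) p_infty 0.
Proof.
  pose proof (is_lim_moment 1) as H1. pose proof (is_lim_moment 2) as H2.
  apply is_lim_ext_loc with
    (fun phi => moment g phi 2 / Rpower phi (INR 2 / alpha) -
                moment g phi 1 / Rpower phi (INR 1 / alpha) *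
                (moment g phi 1 / Rpower phi (INR 1 / alpha))).
  - exists 0. intros x Hx. unfold variance.
    replace (2 / alpha) with (INR 2 / alpha) by (simpl; field; lra).
    rewrite !scale_pow by auto. pose proof (Rpower_pos x (1 / alpha)).
    unfold scale. field. lra.
  - replace (Finite 0) with (Finite (1 - 1 * 1)) by (f_equal; ring).
    apply is_lim_minus'; [exact H2 | exact (is_lim_mult _ _ _ 1 1 H1 H1 I)].
Qed.

End PartitionFunction.

Theorem mainTheorem8 (g : nat -> R) (alpha : R) :
  admissible_g g ->
  0 < alpha <= 1 ->
  is_lim_seq (fun k => g k / Rpower (INR k) alpha) 1 ->
  (forall n : nat,
     is_lim (fun phi => moment g phi n / Rpower phi (INR n / alpha)) p_infty 1) /\
  is_lim (fun phi => ln (Zpart g phi) / (alpha * Rpower phi (1 / alpha))) p_infty 1 /\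
  is_lim (fun phi => variance g phi / Rpower phi (2 / alpha)) p_infty 0.
Proof.
  intros [g_ge0 [g_eq0 [_ g_mono]]] [alpha_pos _] g_equiv.
  assert (g_pos : forall k, 0 < g (S k)).
  { intros k. destruct (g_ge0 (S k)) as [|Hk]; auto.
    symmetry in Hk. apply g_eq0 in Hk. discriminate. }
  repeat split.
  - intros n. apply is_lim_moment; auto.
  - apply is_lim_ln_Zpart; auto.
  - apply is_lim_variance; auto.
Qed.
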